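(* Let $A$ be an associative unital algebra over a field $k$ and $\delta$ a $k$-linear derivation of $A$ such that $\delta$ is locally nilpotent if $\mathrm{char}(k)=0$, and $\delta^p=0$ if $\mathrm{char}(k)=p>0$. Suppose $\delta(x)=1$ for some $x\in A$. Then $A$ is a self-projective left $A[z;\delta]$-module; equivalently, for every $\delta$-stable left ideal $I$ of $A$ and every $a\in A$ with $\delta(a)\in I$ there exists $y\in A^\delta$ with $a-y\in I$.
   Context: $A^\delta=\ker\delta$. $\delta$ locally nilpotent means every $a$ satisfies $\delta^n(a)=0$ for some $n>0$. $A[z;\delta]$ is the differential operator ring ($A[z]$ as left $A$-module, $za=az+\delta(a)$), acting on $A$ by $(\sum_i a_iz^i)\cdot x=\sum_ia_i\delta^i(x)$; its submodules of $A$ are the $\delta$-stable left ideals. A module $M$ is self-projective if for every submodule $N$, every homomorphism $M\to M/N$ lifts to an endomorphism of $M$. *)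

From HB Require Import structures.
From mathcomp Require Import all_boot all_order all_algebra.
Set Implicit Arguments. Unset Strict Implicit. Unset Printing Implicit Defensive.
Import GRing.Theory.
Local Open Scope ring_scope.

Section DiffOp.
Variable A : nzRingType.

(* An element of the differential operator ring A[z;d] is a finite sum
   \sum_i a_i z^i, represented by its coefficient sequence P = [:: a_0; a_1; ...]. *)
Definition dop_act (d : A -> A) (P : seq A) (x : A) : A :=
  \sum_(i < size P) P`_i * iter i d x.

Definition is_dsubmodule (d : A -> A) (N : A -> Prop) : Prop :=
  [/\ N 0, (forall x y, N x -> N y -> N (x + y)) &
      (forall P x, N x -> N (dop_act d P x))].

(* g : A -> A represents (through chosen representatives) a map A -> A/N;
   it is an A[z;d]-module homomorphism A -> A/N. *)
Definition is_dhom_quot (d : A -> A) (N : A -> Prop) (g : A -> A) : Prop :=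
  (forall x y, N (g (x + y) - (g x + g y))) /\
  (forall P x, N (g (dop_act d P x) - dop_act d P (g x))).

Definition is_dendo (d : A -> A) (h : A -> A) : Prop :=
  (forall x y, h (x + y) = h x + h y) /\
  (forall P x, h (dop_act d P x) = dop_act d P (h x)).

Definition dself_projective (d : A -> A) : Prop :=
  forall N : A -> Prop, is_dsubmodule d N ->
  forall g : A -> A, is_dhom_quot d N g ->
  exists h : A -> A, is_dendo d h /\ (forall x, N (h x - g x)).

Definition is_dstable_lideal (d : A -> A) (I : A -> Prop) : Prop :=
  [/\ I 0, (forall x y, I x -> I y -> I (x + y)),
      (forall r x, I x -> I (r * x)) & (forall x, I x -> I (d x))].
End DiffOp.

(* Given x with d x = 1, the Taylor formula for d at "-x" produces a
   d-constant y = \sum_i (-1)^i / i! x^i d^i(a) which differs from a by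
   an element of the left ideal generated by d a, d^2 a, ...: the sum is finite
   by nilpotency, and the factorials do not vanish since d^p = 0 in
   characteristic p.  Self-projectivity follows because an A[z;d]-linear map
   A -> A/N is determined by the class of g 1, which is annihilated by d modulo
   N; lifting it to a constant y, right multiplication by y is an
   A[z;d]-endomorphism of A lifting g. *)
From HB Require Import structures.
From mathcomp Require Import all_boot all_order all_algebra.
From Stdlib Require Import Classical.
Import GRing.Theory.
Local Open Scope ring_scope.

Section Derivation.
Variables (A : nzRingType) (d : A -> A).
Hypothesis derM : forall a b : A, d (a * b) = d a * b + a * d b.

Lemma derivation1 : d 1 = 0.
Proof.
have h := derM 1 1; rewrite !mul1r mulr1 in h.
by apply: (@addrI _ (d 1)); rewrite addr0 -h.
Qed.

Lemma derivation_exprS (x : A) i : d x = 1 -> d (x ^+ i.+1) = x ^+ i *+ i.+1.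
Proof.
move=> dx; elim: i => [|i IH]; first by rewrite expr1 expr0 dx.
by rewrite exprS derM dx mul1r IH mulrnAr -exprS [RHS]mulrS.
Qed.

Lemma iter_derivation_mulr (c : A) : d c = 0 ->
  forall i z, iter i d (z * c) = iter i d z * c.
Proof. by move=> dc; elim=> [|i IH] z //=; rewrite IH derM dc mulr0 addr0. Qed.

Lemma dop_act_const (r z : A) : dop_act d [:: r] z = r * z.
Proof. by rewrite /dop_act /= big_ord_recl big_ord0 /= addr0. Qed.

Lemma dop_act_z (z : A) : dop_act d [:: 0; 1] z = d z.
Proof.
by rewrite /dop_act /= !big_ord_recl big_ord0 /= mul0r add0r mul1r addr0.
Qed.

Lemma dsubmodule_dstable_lideal {N : A -> Prop} :
  is_dsubmodule d N -> is_dstable_lideal d N.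
Proof.
case=> N0 ND NP; split=> // [r z /(NP [:: r])|z /(NP [:: 0; 1])].
  by rewrite dop_act_const.
by rewrite dop_act_z.
Qed.

Lemma dendo_mulr (y : A) : d y = 0 -> is_dendo d (fun z => z * y).
Proof.
move=> dy; split=> [z w|P z]; first by rewrite mulrDl.
rewrite /dop_act mulr_suml; apply: eq_bigr => i _.
by rewrite iter_derivation_mulr // mulrA.
Qed.

Section Quotient.
Context {N : A -> Prop} {g : A -> A}.
Hypotheses (hN : is_dsubmodule d N) (hg : is_dhom_quot d N g).

Let N_lideal : is_dstable_lideal d N := dsubmodule_dstable_lideal hN.

Let NN {z} : N z -> N (- z).
Proof. by case: N_lideal => _ _ NM _ /(NM (-1)); rewrite mulN1r. Qed.

Let ND {z w} : N z -> N w -> N (z + w).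
Proof. by case: hN => _ ND _; apply: ND. Qed.

Let NB {z w} : N z -> N w -> N (z - w).
Proof. by move=> Nz /NN; apply: ND. Qed.

Lemma dhom_quot0 : N (g 0).
Proof.
case: hg => gD _; have := gD 0 0.
by rewrite addr0 opprD addrA subrr add0r => /NN; rewrite opprK.
Qed.

Lemma dhom_quot_d1 : N (d (g 1)).
Proof.
case: hg => _ gP; have := NB dhom_quot0 (gP [:: 0; 1] 1).
by rewrite !dop_act_z derivation1 opprB addrC subrK.
Qed.

Lemma dhom_quot_mulr (y : A) : N (g 1 - y) -> forall z, N (z * y - g z).
Proof.
case: hg => _ gP Ny z; case: N_lideal => _ _ NM _.
have := NN (ND (gP [:: z] 1) (NM z _ Ny)).
by rewrite !dop_act_const mulr1 mulrBr addrA subrK opprB.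
Qed.
End Quotient.

Lemma dself_projective_of_constant_lift :
  (forall I : A -> Prop, is_dstable_lideal d I ->
     forall a : A, I (d a) -> exists y : A, d y = 0 /\ I (a - y)) ->
  dself_projective d.
Proof.
move=> lift N hN g hg.
have [y [dy Ny]] := lift N (dsubmodule_dstable_lideal hN) _ (dhom_quot_d1 hN hg).
by exists (fun z => z * y); split; [exact: dendo_mulr | exact: dhom_quot_mulr].
Qed.
End Derivation.

Arguments derivation1 {A d}.
Arguments derivation_exprS {A d}.

Lemma iter_nilpotent_bound {k : fieldType} {T : Type} {d : T -> T} {z : T} :
  ([pchar k] =i pred0 -> forall a : T, exists n, (0 < n)%N /\ iter n d a = z) ->
  (forall p, p \in [pchar k] -> forall a : T, iter p d a = z) ->
  forall a : T,
  exists n, iter n.+1 d a = z /\ forall j, (j < n)%N -> (j.+1)%:R != 0 :> k.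
Proof.
move=> hchar0 hcharp a.
have [[p hp]|nochar] := classic (exists p, p \in [pchar k]).
  exists p.-1; have p_prime := pcharf_prime hp.
  rewrite prednK ?prime_gt0 //; split; first exact: hcharp.
  move=> j hj; rewrite -(dvdn_pcharf hp); apply/negP => /dvdn_leq => /(_ isT).
  by rewrite leqNgt -(ltn_predK (prime_gt1 p_prime)) ltnS hj.
have char0 : [pchar k] =i pred0.
  by move=> n; rewrite inE; apply/negP => hn; apply: nochar; exists n.
have [n [n_gt0 hn]] := hchar0 char0 a.
exists n.-1; rewrite prednK //; split => // j _.
by move/pcharf0P: char0 => ->.
Qed.

(* [taylor_coef k i = (-1)^i / i!], written recursively so that only the
   nonvanishing of [1, ..., i] in [k] is ever needed. *)
Fixpoint taylor_coef (k : fieldType) (i : nat) : k :=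
  if i is j.+1 then - taylor_coef k j / j.+1%:R else 1.

Section ConstantPart.
Variables (k : fieldType) (A : algType k) (d : {linear A -> A}).
Hypothesis derM : forall a b : A, d (a * b) = d a * b + a * d b.
Variables (x : A) (n : nat).
Hypothesis dx : d x = 1.
Hypothesis unit_nat : forall j, (j < n)%N -> j.+1%:R != 0 :> k.

Definition constant_part (a : A) : A :=
  \sum_(i < n.+1) taylor_coef k i *: (x ^+ i * iter i d a).

Lemma derivation_constant_part (a : A) :
  iter n.+1 d a = 0 -> d (constant_part a) = 0.
Proof.
move=> dna; rewrite linear_sum.
have {}dna : d (iter n d a) = 0 by [].
have dterm (i : 'I_n.+1) : d (taylor_coef k i *: (x ^+ i * iter i d a)) =
    taylor_coef k i *: (d (x ^+ i) * iter i d a)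
    + taylor_coef k i *: (x ^+ i * iter i.+1 d a).
  by rewrite linearZ /= derM scalerDr.
rewrite (eq_bigr _ (fun i _ => dterm i)) big_split /=.
rewrite big_ord_recl [X in _ + X = _]big_ord_recr /=.
rewrite expr0 (derivation1 derM) mul0r scaler0 add0r dna mulr0 scaler0 addr0.
rewrite -big_split /=; apply: big1 => j _.
(* the i = j+1 derivative term cancels the i = j term, as (j+1) c_(j+1) = - c_j *)
rewrite add0n; change (bump 0 j) with j.+1.
rewrite (derivation_exprS derM x j dx) mulrnAl -scalerMnr scalerMnl -scalerDl.
by rewrite /= -mulr_natr divfK ?addNr ?scale0r // unit_nat.
Qed.

Lemma sub_constant_part_in_lideal (I : A -> Prop) (a : A) :
  is_dstable_lideal d I -> I (d a) -> I (a - constant_part a).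
Proof.
case=> I0 ID IM Id Ida.
have Iiter j : I (iter j.+1 d a) by elim: j => //= j IH; apply: Id.
rewrite /constant_part big_ord_recl /= expr0 mul1r scale1r.
rewrite opprD addrA subrr add0r -mulN1r; apply: (IM).
apply: (big_ind I) => // j _; rewrite scalerAl; apply: (IM).
by rewrite add0n; apply: Iiter.
Qed.
End ConstantPart.

Arguments constant_part {k A}.

Theorem proposition3p10 (k : fieldType) (A : algType k) (d : {linear A -> A})
  (hder : forall a b : A, d (a * b) = d a * b + a * d b)
  (hchar0 : [pchar k] =i pred0 ->
            forall a : A, exists n : nat, (0 < n)%N /\ iter n d a = 0)
  (hcharp : forall p : nat, p \in [pchar k] -> forall a : A, iter p d a = 0)
  (hx : exists x : A, d x = 1) :
  dself_projective d /\
  (forall I : A -> Prop, is_dstable_lideal d I ->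
     forall a : A, I (d a) -> exists y : A, d y = 0 /\ I (a - y)).
Proof.
have [x dx] := hx.
have lift I : is_dstable_lideal d I ->
    forall a : A, I (d a) -> exists y : A, d y = 0 /\ I (a - y).
  move=> hI a Ida.
  have [n [dna unit_nat]] := iter_nilpotent_bound hchar0 hcharp a.
  exists (constant_part d x n a); split.
    exact: derivation_constant_part.
  exact: sub_constant_part_in_lideal.
by split=> //; apply: dself_projective_of_constant_lift.
Qed.
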